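(* Let $k\ge\ell\ge0$ be integers. (1) $$\binom{k}{\ell}_{\mathbb{Z},\mathbb{N}}=\prod_{b=2}^k b^{\beta(k,\ell,b)},\qquad \beta(k,\ell,b):=\sum_{i=1}^\infty\left(\left\lfloor\frac{k}{b^i}\right\rfloor-\left\lfloor\frac{\ell}{b^i}\right\rfloor-\left\lfloor\frac{k-\ell}{b^i}\right\rfloor\right).$$ (2) For every $b\ge2$, $$\beta(k,\ell,b)=\frac{1}{b-1}\big(d_b(\ell)+d_b(k-\ell)-d_b(k)\big),$$ where $d_b(j)$ denotes the sum of the base-$b$ digits of $j$.
   Context: $\mathbb{N}=\{0,1,2,\dots\}$. For an integer $b\ge0$ and $a\in\mathbb{Z}$ define $\operatorname{ord}_b(a):=\sup\{k\in\mathbb{N}: a\mathbb{Z}\subseteq b^k\mathbb{Z}\}$ (convention $0^0=1$); thus for $b\ge2$ it is the largest $k$ with $b^k\mid a$ ($+\infty$ for $a=0$), $\operatorname{ord}_0(a)=+\infty$ if $a=0$ and $0$ otherwise, and $\operatorname{ord}_1(a)=+\infty$. For nonempty $S\subseteq\mathbb{Z}$, a $b$-ordering of $S$ is a sequence $(a_i)_{i\ge0}$ in $S$ such that for each $i\ge1$, $a_i$ attains $\min_{a'\in S}\sum_{j=0}^{i-1}\operatorname{ord}_b(a'-a_j)$; the $b$-exponent sequence is $\alpha_k(S,b):=\sum_{j=0}^{k-1}\operatorname{ord}_b(a_k-a_j)$ for any $b$-ordering (independent of the choice). For $\mathcal{T}\subseteq\mathbb{N}$ the generalized factorial is $k!_{S,\mathcal{T}}:=\prod_{b\in\mathcal{T}}b^{\alpha_k(S,b)}$,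 with conventions $b^{+\infty}=0$ for $b=0$ and $b\ge2$, $1^{+\infty}=1$, and $b^0=1$ for all $b\in\mathbb{N}$. The generalized binomial coefficient is $\binom{k}{\ell}_{S,\mathcal{T}}:=k!_{S,\mathcal{T}}/(\ell!_{S,\mathcal{T}}(k-\ell)!_{S,\mathcal{T}})$ for $0\le\ell\le k<|S|$. *)

From Stdlib Require Import ClassicalEpsilon.
From mathcomp Require Import all_boot all_order all_algebra.
Set Implicit Arguments. Unset Strict Implicit. Unset Printing Implicit Defensive.
Import Order.TTheory GRing.Theory Num.Theory.

(* Extended naturals N ∪ {+oo}: [None] is +oo. *)
Definition enat := option nat.

Definition eadd (x y : enat) : enat :=
  match x, y with Some m, Some n => Some (m + n)%N | _, _ => None end.

Definition ele (x y : enat) : bool :=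
  match x, y with
  | _, None => true
  | None, Some _ => false
  | Some m, Some n => (m <= n)%N
  end.

(* ord_b(a) := sup { k : a Z ⊆ b^k Z } = sup { k : b^k | a }.  The set is
   downward closed and contains 0, so the sup is +oo if every k is in it,
   and otherwise (least k not in it) - 1. *)
Definition ord (b : nat) (a : int) : enat :=
  match excluded_middle_informative
          (exists k, ~~ ((b ^ k)%:Z %| a)%Z) with
  | left H => Some (ex_minn H).-1
  | right _ => None
  end.

Definition sumord (b : nat) (a : nat -> int) (i : nat) (x : int) : enat :=
  \big[eadd/Some 0%N]_(j < i) ord b (x - a j).

Definition is_bordering (S : pred int) (b : nat) (a : nat -> int) : Prop :=
  (forall i, S (a i)) /\
  (forall i, (0 < i)%N -> forall x, S x -> ele (sumord b a i (a i)) (sumord b a i x)).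

(* alpha_k(S,b), computed along some b-ordering (independent of the choice);
   junk value +oo if no b-ordering exists. *)
Definition alpha (S : pred int) (b k : nat) : enat :=
  match excluded_middle_informative (exists a, is_bordering S b a) with
  | left H => let a := proj1_sig (constructive_indefinite_description _ H) in
              sumord b a k (a k)
  | right _ => None
  end.

(* b^e with conventions b^{+oo} = 0 for b = 0 and b >= 2, 1^{+oo} = 1,
   and 0^0 = 1 (as in ssrnat). *)
Definition epow (b : nat) (e : enat) : nat :=
  match e with
  | Some n => (b ^ n)%N
  | None => if b == 1%N then 1%N else 0%N
  end.

(* Infinite product over nat of a finitely supported family (all but
   finitely many factors equal to 1); junk value 0 otherwise. *)
Definition fprod (f : nat -> nat) : nat :=
  match excluded_middle_informative (exists N, forall i, (N <= i)%N -> f i = 1%N) with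
  | left H => let N := proj1_sig (constructive_indefinite_description _ H) in
              (\prod_(i < N) f i)%N
  | right _ => 0%N
  end.

(* Infinite sum over nat of a finitely supported integer family; junk 0 otherwise. *)
Definition fsum (f : nat -> int) : int :=
  match excluded_middle_informative (exists N, forall i, (N <= i)%N -> f i = 0%R) with
  | left H => let N := proj1_sig (constructive_indefinite_description _ H) in
              (\sum_(i < N) f i)%R
  | right _ => 0%R
  end.

Definition gfact (S : pred int) (T : pred nat) (k : nat) : nat :=
  fprod (fun b => if T b then epow b (alpha S b k) else 1%N).

Definition gbinom (S : pred int) (T : pred nat) (k l : nat) : rat :=
  ((gfact S T k)%:R / ((gfact S T l)%:R * (gfact S T (k - l))%:R))%R.

Definition beta (k l b : nat) : int :=
  fsum (fun i => if i == 0%N then 0%R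
                 else (Posz (k %/ b ^ i) - Posz (l %/ b ^ i) - Posz ((k - l) %/ b ^ i))%R).

Definition digsum (b j : nat) : int :=
  fsum (fun i => Posz ((j %/ b ^ i) %% b)).

From Pilot Require Import Defs.
From mathcomp Require Import all_boot all_order all_algebra.
Import Order.TTheory GRing.Theory Num.Theory.
From Stdlib Require Import ClassicalEpsilon.
From HB Require Import structures.
From mathcomp Require Import zify.
Set Implicit Arguments. Unset Strict Implicit.

(* For b >= 2 and a sequence (a_j), let C_k^i(x) count the j < k with
   a_j = x (mod b^i).  For x outside {a_j : j < k} the sum
   sum_{j<k} ord_b(x - a_j) equals sum_{i>=1} C_k^i(x).  The residues mod b^i
   partition the a_j, so the average of C_k^i is k/b^i; when every count is
   balanced (between floor(k/b^i) and floor(k/b^i) + 1), choosing x digit by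
   digit gives C_k^i(x) = floor(k/b^i) at all levels at once.  By induction
   on k, every b-ordering of Z keeps all counts balanced and picks such an
   a_k, so alpha_k(Z, b) = sum_{i>=1} floor(k/b^i).  For b = 0 the exponent
   is 0, and b = 1 contributes the factor 1.  The digit formula comes from
   floor(n/b^i) = b floor(n/b^(i+1)) + (i-th base-b digit of n). *)

Lemma eaddA : associative eadd.
Proof. by move=> [x|] [y|] [z|] //=; rewrite addnA. Qed.

Lemma eaddC : commutative eadd.
Proof. by move=> [x|] [y|] //=; rewrite addnC. Qed.

Lemma add0e : left_id (Some 0) eadd.
Proof. by case. Qed.

HB.instance Definition _ := Monoid.isComLaw.Build enat (Some 0) eadd eaddA eaddC add0e.

Lemma big_ord_support (R : Type) (idx : R) {op : Monoid.law idx} (f : nat -> R) N1 N2 :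
  (forall i, N1 <= i -> f i = idx) -> (forall i, N2 <= i -> f i = idx) ->
  \big[op/idx]_(i < N1) f i = \big[op/idx]_(i < N2) f i.
Proof.
wlog le_N12 : N1 N2 / N1 <= N2 => [wlog_le|f1 _].
  by case: (leqP N1 N2) => [|/ltnW] le_N => f1 f2; [|symmetry]; apply: wlog_le.
rewrite -!(big_mkord xpredT) (big_cat_nat (leq0n N1) le_N12) /=.
rewrite [X in op _ X]big1_seq ?Monoid.mulm1 // => i /andP[_].
by rewrite mem_index_iota => /andP[/f1].
Qed.

Lemma fprod_ord f N : (forall i, N <= i -> f i = 1) -> Defs.fprod f = \prod_(i < N) f i.
Proof.
move=> fN; rewrite /Defs.fprod; case: excluded_middle_informative => [H|[]]; last by exists N.
by case: constructive_indefinite_description => N' fN' /=; apply: big_ord_support.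
Qed.

Lemma fsum_ord (f : nat -> int) N :
  (forall i, N <= i -> f i = 0%R) -> fsum f = (\sum_(i < N) f i)%R.
Proof.
move=> fN; rewrite /fsum; case: excluded_middle_informative => [H|[]]; last by exists N.
by case: constructive_indefinite_description => N' fN' /=; apply: big_ord_support.
Qed.

Lemma sum_Posz (I : Type) (r : seq I) (F : I -> nat) :
  (\sum_(i <- r) Posz (F i))%R = Posz (\sum_(i <- r) F i).
Proof. by rewrite (big_morph Posz PoszD (erefl 0%R)). Qed.

Lemma leq_sum_eq (I : finType) (F G : I -> nat) :
  (forall i, F i <= G i) -> \sum_i G i <= \sum_i F i -> forall i, F i = G i.
Proof.
move=> leFG leGF i; apply/eqP; rewrite eqn_leq leFG -subn_eq0.
have : \sum_j (G j - F j) == 0 by rewrite sumnB // subn_eq0.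
by rewrite sum_nat_eq0 => /forallP/(_ i).
Qed.

Lemma sum_residues_dvdz_sub m (t : int) : 0 < m ->
  \sum_(r < m) ((Posz m %| (Posz r - t)%R)%Z : nat) = 1.
Proof.
move=> m_gt0; have m_neq0 : Posz m != 0%R by rewrite eqz_nat -lt0n.
have [n tm_n] : exists n, (t %% Posz m)%Z = Posz n.
  by case: (t %% Posz m)%Z (modz_ge0 t m_neq0) => // n _; exists n.
have lt_nm : n < m by rewrite -ltz_nat -tm_n ltz_pmod // ltz_nat.
have dvd_r (r : 'I_m) : (Posz m %| (Posz r - t)%R)%Z = (val r == n).
  rewrite -eqz_mod_dvd modz_small ?tm_n ?eqz_nat //.
  by rewrite lez_nat ltz_nat ltn_ord.
rewrite (bigD1 (Ordinal lt_nm)) // dvd_r eqxx big1 ?addn0 // => r.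
by rewrite dvd_r -(inj_eq val_inj) => /negbTE ->.
Qed.

Lemma ord_zero b : ord b 0 = None.
Proof.
rewrite /ord; case: excluded_middle_informative => // -[k /negP[]].
exact: dvdz0.
Qed.

Section Legendre.
Variable b : nat.
Hypothesis b_gt1 : 1 < b.

Definition legendre (k : nat) : nat := \sum_(i < k) k %/ b ^ i.+1.

Lemma expb_gt0 i : 0 < b ^ i.
Proof. by rewrite expn_gt0 (ltnW b_gt1). Qed.

Lemma divn_exp_small n i : n <= i -> n %/ b ^ i = 0.
Proof. by move=> le_ni; rewrite divn_small // (leq_ltn_trans le_ni) // ltn_expl. Qed.

Lemma legendreE k M : k <= M -> \sum_(i < M) k %/ b ^ i.+1 = legendre k.
Proof.
move=> le_kM; apply: (big_ord_support (f := fun i => k %/ b ^ i.+1)) => i le_i.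
  by rewrite divn_exp_small // leqW // (leq_trans le_kM).
by rewrite divn_exp_small // leqW.
Qed.

Lemma legendre_small n : n < b -> legendre n = 0.
Proof.
move=> lt_nb; apply: big1 => i _.
by rewrite divn_small // (leq_trans lt_nb) // -{1}(expn1 b) leq_exp2l.
Qed.

Lemma digits_legendre n : \sum_(i < n.+1) (n %/ b ^ i %% b) + b.-1 * legendre n = n.
Proof.
have : \sum_(i < n.+1) n %/ b ^ i
         = \sum_(i < n.+1) (n %/ b ^ i.+1 * b + n %/ b ^ i %% b).
  by apply: eq_bigr => i _; rewrite expnSr divnMA -divn_eq.
rewrite big_split -big_distrl big_ord_recl big_ord_recr /= expn0 divn1.
rewrite !legendreE // divn_exp_small // addn0 -(prednK (ltnW b_gt1)); nia.
Qed.

Lemma digsum_legendre n : digsum b n = (Posz n - Posz (b.-1 * legendre n))%R.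
Proof.
rewrite /digsum (fsum_ord (N := n.+1)) => [|i lt_ni].
  by rewrite sum_Posz -[in Posz n](digits_legendre n) PoszD addrK.
by rewrite divn_exp_small ?mod0n // ltnW.
Qed.

Lemma beta_legendre k l : l <= k ->
  beta k l b = (Posz (legendre k) - Posz (legendre l) - Posz (legendre (k - l)))%R.
Proof.
move=> le_lk; rewrite /beta (fsum_ord (N := k.+1)) => [|i lt_ki]; last first.
  case: i lt_ki => // i /ltnW le_ki /=.
  rewrite (divn_exp_small le_ki) (divn_exp_small (leq_trans le_lk le_ki)).
  by rewrite (divn_exp_small (leq_trans (leq_subr l k) le_ki)).
rewrite big_ord_recl add0r -(legendreE (leqnn k)) -(legendreE le_lk).
rewrite -(legendreE (leq_subr l k)) -!sum_Posz -!sumrB.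
by apply: eq_bigr => i _; rewrite lift0.
Qed.

End Legendre.

Section BOrderings.
Variable b : nat.
Hypothesis b_gt1 : 1 < b.

Definition dvdb i (y : int) : bool := ((b ^ i)%:Z %| y)%Z.

Lemma dvdb0 y : dvdb 0 y.
Proof. by rewrite /dvdb expn0 dvd1z. Qed.

Lemma dvdb_le i i' y : i <= i' -> dvdb i' y -> dvdb i y.
Proof. by move=> le_ii'; apply: dvdz_trans; rewrite dvdzE /= dvdn_exp2l. Qed.

Lemma dvdb_small i y : y != 0%R -> `|y| < b ^ i -> ~~ dvdb i y.
Proof.
move=> y_neq0 lt_yb; rewrite /dvdb dvdzE /=; apply/negP => /dvdn_leq.
by rewrite absz_gt0 y_neq0 leqNgt lt_yb => /(_ isT).
Qed.

Lemma dvdb_congr i x y z : dvdb i (x - y) -> dvdb i (x - z) = dvdb i (y - z).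
Proof.
move=> dvd_xy; have -> : (x - z = (x - y) + (y - z))%R by rewrite addrA subrK.
by rewrite /dvdb rpredDl.
Qed.

Variable a : nat -> int.

Definition ncong k i x : nat := \sum_(j < k) dvdb i (x - a j).

Definition balanced k := forall i x, k %/ b ^ i <= ncong k i x <= (k %/ b ^ i).+1.

Definition at_floor k x := forall i, ncong k i x = k %/ b ^ i.

Lemma balanced0 : balanced 0.
Proof. by move=> i x; rewrite /ncong big_ord0 div0n. Qed.

Lemma ncong_congr k i x y : dvdb i (x - y) -> ncong k i x = ncong k i y.
Proof. by move=> dvd_xy; apply: eq_bigr => j _; rewrite (dvdb_congr _ dvd_xy). Qed.

Lemma ncong_antitone k x i i' : i <= i' -> ncong k i' x <= ncong k i x.
Proof.
move=> le_ii'; apply: leq_sum => j _.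
by case dvd_i': (dvdb i' _) => //=; rewrite (dvdb_le le_ii' dvd_i').
Qed.

Lemma ncong_level0 k x : ncong k 0 x = k.
Proof.
by rewrite /ncong (eq_bigr (fun=> 1)) => [|j _]; rewrite ?dvdb0 // sum1_card card_ord.
Qed.

Lemma ncongS k i x : ncong k.+1 i x = ncong k i x + dvdb i (x - a k).
Proof. by rewrite /ncong big_ord_recr. Qed.

Lemma sum_residues_ncong k i : \sum_(r < b ^ i) ncong k i (Posz r) = k.
Proof.
rewrite /ncong exchange_big /= -[RHS]card_ord -sum1_card; apply: eq_bigr => j _.
exact/sum_residues_dvdz_sub/expb_gt0.
Qed.

Lemma ncong_lift k n w :
  \sum_(d < b) ncong k n.+1 (w + (d * b ^ n)%:Z)%R = ncong k n w.
Proof.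
rewrite /ncong exchange_big /=; apply: eq_bigr => j _.
case dvd_w: (dvdb n (w - a j)); last first.
  apply: big1 => d _; apply/eqP; rewrite eqb0; apply: contraFN dvd_w => dvd_wd.
  have -> : (w - a j = (w + (d * b ^ n)%:Z - a j) - (d * b ^ n)%:Z)%R.
    by rewrite addrAC addrK.
  by apply: rpredB; [exact: dvdb_le (leqnSn n) dvd_wd | rewrite dvdzE /= dvdn_mull].
move: dvd_w => /dvdzP[t def_t].
have bn_neq0 : ((b ^ n)%:Z != 0)%R by rewrite eqz_nat -lt0n expb_gt0.
rewrite [RHS]/= -(sum_residues_dvdz_sub (- t) (ltnW b_gt1)); apply: eq_bigr => d _.
have -> : (w + (d * b ^ n)%:Z - a j = (t + d%:Z) * (b ^ n)%:Z)%R.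
  by rewrite mulrDl -def_t PoszM addrAC.
by rewrite /dvdb expnS PoszM dvdz_mul2r // opprK addrC.
Qed.

(* Pigeonhole on [ncong_lift]: if all b lifts were above the floor at level
   n.+1, their counts would add up to more than [k %/ b ^ n]. *)
Lemma floor_digit_exists k n w : balanced k -> ncong k n w = k %/ b ^ n ->
  exists d : 'I_b, ncong k n.+1 (w + (d * b ^ n)%:Z)%R = k %/ b ^ n.+1.
Proof.
move=> bal_k floor_w.
case: (pickP (fun d : 'I_b => ncong k n.+1 (w + (d * b ^ n)%:Z)%R == k %/ b ^ n.+1)).
  by move=> d /eqP; exists d.
move=> above_floor.
have lt_floor (d : 'I_b) : (k %/ b ^ n.+1).+1 <= ncong k n.+1 (w + (d * b ^ n)%:Z)%R.
  by have := above_floor d; have := bal_k n.+1 (w + (d * b ^ n)%:Z)%R; rewrite /=; lia.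
have : \sum_(d < b) (k %/ b ^ n.+1).+1 <= \sum_(d < b) ncong k n.+1 (w + (d * b ^ n)%:Z)%R.
  by apply: leq_sum => d _; apply: lt_floor.
rewrite ncong_lift floor_w sum_nat_const card_ord expnSr divnMA.
by have := ltn_ceil (k %/ b ^ n) (ltnW b_gt1); lia.
Qed.

Lemma at_floor_exists k : balanced k -> exists w, at_floor k w.
Proof.
move=> bal_k.
have floor_upto n : exists w, forall i, i <= n -> ncong k i w = k %/ b ^ i.
  elim: n => [|n [w floor_w]].
    by exists 0%R => i; rewrite leqn0 => /eqP ->; rewrite ncong_level0 expn0 divn1.
  have [d floor_wd] := floor_digit_exists bal_k (floor_w n (leqnn n)).
  exists (w + (d * b ^ n)%:Z)%R => i; rewrite leq_eqVlt ltnS => /predU1P[-> //|le_in].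
  rewrite -floor_w //; apply: ncong_congr; rewrite addrAC subrr add0r.
  by rewrite /dvdb dvdzE /= dvdn_mull // dvdn_exp2l.
have [w floor_w] := floor_upto k; exists w => i.
case: (leqP i k) => [/floor_w //|lt_ki].
apply/eqP; rewrite (divn_exp_small b_gt1 (ltnW lt_ki)) -leqn0.
by rewrite -(divn_exp_small b_gt1 (leqnn k)) -floor_w // ncong_antitone // ltnW.
Qed.

(* Over the b^i residues the counts sum to k = b^i (k %/ b^i + 1) - 1, each
   at most k %/ b^i + 1, so at most one residue class sits at the floor. *)
Lemma ncong_floor_congr k i x y : balanced k -> (b ^ i %| k.+1)%N ->
  ncong k i x = k %/ b ^ i -> ncong k i y = k %/ b ^ i -> dvdb i (x - y).
Proof.
move=> bal_k dvd_k1 floor_x floor_y; apply/negPn/negP => ndvd_xy.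
have le_r (r : 'I_(b ^ i)) :
    ncong k i (Posz r) + dvdb i (Posz r - x) + dvdb i (Posz r - y) <= (k %/ b ^ i).+1.
  case dvd_rx: (dvdb i (Posz r - x)).
    rewrite (dvdb_congr _ dvd_rx) (negbTE ndvd_xy) (ncong_congr _ dvd_rx).
    by rewrite floor_x addn0 addn1.
  case dvd_ry: (dvdb i (Posz r - y)); last by rewrite !addn0; case/andP: (bal_k i (Posz r)).
  by rewrite (ncong_congr _ dvd_ry) floor_y addn0 addn1.
have : \sum_(r < b ^ i) (ncong k i (Posz r) + dvdb i (Posz r - x) + dvdb i (Posz r - y))
         <= \sum_(r < b ^ i) (k %/ b ^ i).+1 by apply: leq_sum => r _; apply: le_r.
have bi_gt0 := expb_gt0 b_gt1 i.
rewrite !big_split /= sum_residues_ncong /dvdb !sum_residues_dvdz_sub //.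
rewrite sum_nat_const card_ord; have := divnK dvd_k1; rewrite divnS // dvd_k1 /=; nia.
Qed.

Lemma balancedS k : balanced k -> at_floor k (a k) -> balanced k.+1.
Proof.
move=> bal_k floor_ak i x; rewrite ncongS divnS ?expb_gt0 //.
case dvd_x: (dvdb i (x - a k)).
  by rewrite (ncong_congr _ dvd_x) floor_ak; case: (_ %| _)%N => /=; lia.
case dvd_k1: (b ^ i %| k.+1)%N; last by rewrite !addn0; apply: bal_k.
have : ncong k i x != k %/ b ^ i.
  apply: contraFneq dvd_x => floor_x.
  exact: ncong_floor_congr bal_k dvd_k1 floor_x (floor_ak i).
by have := bal_k i x; lia.
Qed.

Lemma ord_dvdb M y : ~~ dvdb M y -> ord b y = Some (\sum_(i < M) dvdb i.+1 y).
Proof.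
move=> ndvd_M; rewrite /ord; case: excluded_middle_informative => [H|[]]; last by exists M.
case: ex_minnP => m ndvd_m min_m; congr Some.
have m_gt0 : 0 < m by case: m ndvd_m {min_m} => // /negP[]; apply: dvdb0.
have ndvd_above i : m <= i.+1 -> dvdb i.+1 y = false.
  by move=> le_mi; apply/negbTE; apply: contra ndvd_m; apply: dvdb_le.
have le_mM := min_m M ndvd_M.
rewrite (big_ord_support (f := fun i => nat_of_bool (dvdb i.+1 y)) (N2 := m.-1)).
- rewrite (eq_bigr (fun=> 1)) ?sum1_card ?card_ord // => i _.
  by apply/eqP; rewrite eqb1; apply/negPn/negP => /min_m; rewrite leqNgt -ltn_predRL ltn_ord.
- by move=> i le_Mi; rewrite ndvd_above //; lia.
- by move=> i le_mi; rewrite ndvd_above //; lia.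
Qed.

Lemma sumord_None k x j : j < k -> x = a j -> sumord b a k x = None.
Proof. by move=> lt_jk ->; rewrite /sumord (bigD1 (Ordinal lt_jk)) //= subrr ord_zero. Qed.

Lemma sumord_ncong k M x :
  ncong k M x = 0 -> sumord b a k x = Some (\sum_(i < M) ncong k i.+1 x).
Proof.
move/eqP; rewrite sum_nat_eq0 => /forallP ndvd_M.
rewrite /sumord (eq_bigr (fun j : 'I_k => Some (\sum_(i < M) dvdb i.+1 (x - a j)))) => [|j _].
  rewrite -(big_morph Some (op1 := eadd) (id1 := Some 0) (op2 := addn) (id2 := 0)) //=.
  by rewrite exchange_big.
by apply: ord_dvdb; rewrite -eqb0; apply: ndvd_M.
Qed.

Lemma ncong_vanishes k y n : sumord b a k y <> None -> exists2 M, n <= M & ncong k M y = 0.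
Proof.
move=> finite_y; exists (n + \sum_(j < k) `|y - a j|); first exact: leq_addr.
apply: big1 => j _; apply/eqP; rewrite eqb0 dvdb_small //.
  by rewrite subr_eq0; apply: contra_not_neq finite_y; apply: sumord_None.
apply: leq_ltn_trans (ltn_expl _ b_gt1).
by rewrite (bigD1 j) //= addnCA leq_addr.
Qed.

Lemma sumord_at_floor k x : at_floor k x -> sumord b a k x = Some (legendre b k).
Proof.
move=> floor_x; rewrite (@sumord_ncong k k) ?floor_x ?(divn_exp_small b_gt1) //.
by congr Some; apply: eq_bigr => i _; rewrite floor_x.
Qed.

Lemma at_floor_sumord_min k x y : balanced k -> at_floor k x ->
  ele (sumord b a k x) (sumord b a k y).
Proof.
move=> bal_k floor_x; rewrite sumord_at_floor //.
case def_y: (sumord b a k y) => [s|] //.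
have [M le_kM ncong_M] : exists2 M, k <= M & ncong k M y = 0.
  by apply: ncong_vanishes; rewrite def_y.
move: def_y; rewrite (sumord_ncong ncong_M) => -[<-] /=.
rewrite -(legendreE b_gt1 le_kM); apply: leq_sum => i _.
by case/andP: (bal_k i.+1 y).
Qed.

Lemma at_floor_of_sumord_le k y : balanced k ->
  ele (sumord b a k y) (Some (legendre b k)) -> at_floor k y.
Proof.
move=> bal_k le_y.
have [M le_kM ncong_M] : exists2 M, k <= M & ncong k M y = 0.
  by apply: ncong_vanishes => none_y; rewrite none_y in le_y.
rewrite (sumord_ncong ncong_M) /= -(legendreE b_gt1 le_kM) in le_y.
have floor_lt (i : 'I_M) : k %/ b ^ i.+1 = ncong k i.+1 y.
  by apply: (leq_sum_eq _ le_y) => j; case/andP: (bal_k j.+1 y).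
move=> [|i]; first by rewrite ncong_level0 expn0 divn1.
case: (ltnP i M) => [lt_iM|le_Mi]; first exact/esym/(floor_lt (Ordinal lt_iM)).
rewrite (divn_exp_small b_gt1) ?(leq_trans le_kM) ?leqW //.
by apply/eqP; rewrite -leqn0 -ncong_M ncong_antitone // leqW.
Qed.

Lemma bordering_at_floor :
  is_bordering predT b a -> forall k, balanced k /\ at_floor k (a k).
Proof.
move=> [_ bord_a]; elim=> [|k [bal_k floor_ak]].
  by split=> [|i]; [apply: balanced0 | rewrite /ncong big_ord0 div0n].
have bal_k1 := balancedS bal_k floor_ak; split=> //.
have [w floor_w] := at_floor_exists bal_k1.
by apply: at_floor_of_sumord_le; rewrite // -(sumord_at_floor floor_w); apply: bord_a.
Qed.

End BOrderings.

Lemma iota_at_floor b k : 1 < b -> at_floor b Posz k k%:Z.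
Proof.
move=> b_gt1 i; elim: k => [|k IH]; first by rewrite /ncong big_ord0 div0n.
rewrite /ncong big_ord_recl divnS ?expb_gt0 // subr0 -IH /ncong.
by congr addn; apply: eq_bigr => j _; rewrite lift0; congr (dvdb _ _ _); lia.
Qed.

Lemma iota_bordering b : 1 < b -> is_bordering predT b Posz.
Proof.
move=> b_gt1; have bal k : balanced b Posz k.
  by elim: k => [|k bal_k]; [apply: balanced0 | apply: balancedS (iota_at_floor k b_gt1)].
by split=> // k _ x _; apply: at_floor_sumord_min (iota_at_floor k b_gt1).
Qed.

Lemma alpha_legendre b k : 1 < b -> alpha predT b k = Some (legendre b k).
Proof.
move=> b_gt1; rewrite /alpha; case: excluded_middle_informative => [H|[]]; last first.
  by exists Posz; apply: iota_bordering.
case: constructive_indefinite_description => a bord_a /=.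
by apply: sumord_at_floor; have [] := bordering_at_floor b_gt1 bord_a k.
Qed.

Lemma ord0_neq0 y : y != 0%R -> ord 0 y = Some 0.
Proof.
move=> y_neq0; rewrite /ord; case: excluded_middle_informative => [H|[]]; last first.
  by exists 1; rewrite expn1 dvd0z.
case: ex_minnP => m ndvd_m /(_ 1); rewrite expn1 dvd0z y_neq0 => /(_ isT).
by case: m ndvd_m => [|[]] //; rewrite expn0 dvd1z.
Qed.

Lemma sumord0_fresh a k x : (forall j, j < k -> x != a j) -> sumord 0 a k x = Some 0.
Proof. by move=> fresh_x; apply: big1 => j _; rewrite ord0_neq0 // subr_eq0 fresh_x. Qed.

Lemma alpha0 k : alpha predT 0 k = Some 0.
Proof.
rewrite /alpha; case: excluded_middle_informative => [H|[]]; last first.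
  exists Posz; split=> // k' _ x _; rewrite sumord0_fresh; first by case: sumord.
  by move=> j lt_jk; rewrite eqz_nat neq_ltn lt_jk orbT.
case: constructive_indefinite_description => a [_ bord_a] /=.
case: k => [|k]; first by rewrite /sumord big_ord0.
set x := Posz (\sum_(j < k.+1) `|a j|).+1.
have fresh_x j : j < k.+1 -> x != a j.
  move=> lt_jk; apply/eqP => /(congr1 absz) /= abs_aj.
  have : `|a j| <= \sum_(i < k.+1) `|a i| by rewrite (bigD1 (Ordinal lt_jk)) //= leq_addr.
  by rewrite -abs_aj ltnn.
have := bord_a k.+1 isT x isT; rewrite (sumord0_fresh fresh_x).
by case: sumord => // n /=; rewrite leqn0 => /eqP ->.
Qed.

Lemma gfact_legendre n N : n < N ->
  gfact predT predT n = \prod_(2 <= b < N) b ^ legendre b n.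
Proof.
move=> lt_nN.
have epow_alpha b : epow b (alpha predT b n) = if 1 < b then b ^ legendre b n else 1.
  case: b => [|[|b]]; last by rewrite alpha_legendre.
    by rewrite alpha0.
  by case: alpha => //= m; rewrite exp1n.
rewrite /gfact (fprod_ord (N := N)) => [|b le_Nb]; last first.
  rewrite /= epow_alpha; case: ifP => // b_gt1.
  by rewrite legendre_small // (leq_trans lt_nN).
rewrite big_geq_mkord [RHS]big_mkcond /=; apply: eq_bigr => b _.
by rewrite epow_alpha.
Qed.

Lemma gbinom_beta k l : l <= k ->
  gbinom predT predT k l = (\prod_(2 <= b < k.+1) ((b%:R : rat) ^ beta k l b))%R.
Proof.
move=> le_lk; rewrite /gbinom !(gfact_legendre (N := k.+1)) ?ltnS ?leq_subr //.
rewrite !natr_prod -big_split /= -prodfV -big_split /=.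
apply: eq_big_nat => b /andP[b_gt1 _]; rewrite beta_legendre //.
have b_neq0 : (b%:R : rat) != 0%R by rewrite pnatr_eq0 -lt0n ltnW.
by rewrite !natrX !expfzDr // -!exprnN invfM mulrA.
Qed.

Lemma beta_digsum k l b : l <= k -> 1 < b ->
  (Posz b.-1 * beta k l b = digsum b l + digsum b (k - l) - digsum b k)%R.
Proof.
move=> le_lk b_gt1; rewrite beta_legendre // !digsum_legendre // !PoszM -(subzn le_lk).
lia.
Qed.

Theorem theorem7p4 (k l : nat) (hlk : (l <= k)%N) :
  gbinom predT predT k l
    = (\prod_(2 <= b < k.+1) ((b%:R : rat) ^ beta k l b))%R
  /\
  (forall b : nat, (2 <= b)%N ->
     ((beta k l b)%:~R : rat)
       = (((digsum b l + digsum b (k - l) - digsum b k)%:~R : rat) / (b.-1)%:R)%R).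
Proof.
split=> [|b b_gt1]; first exact: gbinom_beta.
have b1_neq0 : ((b.-1)%:R : rat) != 0%R by rewrite pnatr_eq0 -lt0n -ltnS prednK // ltnW.
by rewrite -beta_digsum // intrM -pmulrn mulrAC mulfV // mul1r.
Qed.
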